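(* Let $n\in\mathbb N$, $p>0$, and let $W\subseteq[n]$ satisfy $p|W|\ge 200\log n$. Let $d$ satisfy $1\le d\le p|W|/(240\log(np))$. Then, with probability $1-o(n^{-2})$ (as $n\to\infty$), in $G=G(n,p)$ every set $U\subseteq V(G)$ with $|U|\le |W|/(4d)$ satisfies $|N(U,W)|\ge d|U|$.
   Context: $G(n,p)$ is the binomial random graph on $[n]$. For $U\subseteq V(G)$, $N(U)=\big(\bigcup_{u\in U}N(u)\big)\setminus U$ and $N(U,W)=N(U)\cap W$. $\log$ is the natural logarithm; $p,W,d$ may depend on $n$. *)

From HB Require Import structures.
From mathcomp Require Import all_boot all_order all_algebra.
From mathcomp Require Import all_classical all_reals all_analysis.
Set Implicit Arguments. Unset Strict Implicit. Unset Printing Implicit Defensive.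
Import Order.TTheory GRing.Theory Num.Theory.
Local Open Scope ring_scope.

(* A graph on [n] = 'I_n is encoded by an edge indicator on ordered pairs;
   only pairs (i,j) with i < j are meaningful (an edge {i,j}). *)
Definition graph (n : nat) := {ffun 'I_n * 'I_n -> bool}.

Definition adj (n : nat) (G : graph n) (u v : 'I_n) : bool :=
  if (u < v)%N then G (u, v) else if (v < u)%N then G (v, u) else false.

(* Probability mass of G under the binomial random graph G(n,p):
   every pair i<j is an edge independently with probability p;
   entries G (i,j) with ~~ (i < j) must be false (mass 0 otherwise). *)
Definition gnp_weight (R : realType) (n : nat) (p : R) (G : graph n) : R :=
  \prod_(e : 'I_n * 'I_n)
     (if (e.1 < e.2)%N then (if G e then p else 1 - p)
      else (if G e then 0 else 1)).

Definition gnp_prob (R : realType) (n : nat) (p : R) (A : pred (graph n)) : R :=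
  \sum_(G : graph n | A G) gnp_weight p G.

Definition nbhd (n : nat) (G : graph n) (U : {set 'I_n}) : {set 'I_n} :=
  [set v | (v \notin U) && [exists u in U, adj G u v]].

Definition nbhdW (n : nat) (G : graph n) (U W : {set 'I_n}) : {set 'I_n} :=
  nbhd G U :&: W.

Definition expands (R : realType) (n : nat) (W : {set 'I_n}) (d : R)
  (G : graph n) : bool :=
  [forall U : {set 'I_n},
     ((#|U|%:R : R) <= #|W|%:R / (4 * d)) ==> (d * #|U|%:R <= #|nbhdW G U W|%:R)].

From HB Require Import structures.
From mathcomp Require Import all_boot all_order all_algebra.
From mathcomp Require Import all_classical all_reals all_analysis.
Import Order.TTheory GRing.Theory Num.Theory.
Import numFieldNormedType.Exports.
Local Open Scope classical_set_scope.
Local Open Scope ring_scope.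

From mathcomp Require Import ring lra.

(* Fix U with |U| = u >= 1 and put X = |N(U,W)|.  For 0 < t <= 1, Markov's
   inequality for t^X gives P(X <= K) <= t^-K E[t^X], and t^X is at most the
   product over c in W \ U of ([c has no neighbour in U] + t deg_U(c)).
   Expanding this product as a sum over the choices of a witness for every c
   writes it as a sum of products of single-edge factors in which every edge
   occurs at most once, so independence of the edges gives
   E[t^X] <= ((1-p)^u + u t p)^|W \ U|.  With K = floor(d u), t = 1/16 when
   p u <= 3 and t = e^-pu / (p u) otherwise, this is at most n^-(2u+3); the
   union bound over U then gives P(failure) <= n^-3 (1 + n^-2)^n <= e / n^3. *)

Local Close Scope classical_set_scope.

Section BigFacts.
Context {M : Type} {idx : M} {op : Monoid.com_law idx}.

Lemma big_option (T : finType) (F : option T -> M) :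
  \big[op/idx]_(o : option T) F o = op (F None) (\big[op/idx]_(v : T) F (Some v)).
Proof.
rewrite (bigD1 None) //=; congr (op _ _).
rewrite (reindex_omap Some id) /=; last by case.
by apply: eq_bigl => j; rewrite eqxx.
Qed.

Lemma big_ltn_pairs {n} (F : 'I_n -> 'I_n -> M) : (forall a, F a a = idx) ->
  \big[op/idx]_(e : 'I_n * 'I_n | (e.1 < e.2)%N) op (F e.1 e.2) (F e.2 e.1) =
  \big[op/idx]_(a : 'I_n) \big[op/idx]_(c : 'I_n) F a c.
Proof.
move=> Fdiag; rewrite big_split /= pair_big /=.
rewrite [RHS](bigID (fun e : 'I_n * 'I_n => (e.1 < e.2)%N)) /=; congr (op _ _).
rewrite [RHS](bigID (fun e : 'I_n * 'I_n => e.1 == e.2)) /=.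
rewrite [X in _ = op X _]big1 ?Monoid.mul1m; last by move=> [a b] /= /andP[_ /eqP ->].
rewrite (reindex (fun e : 'I_n * 'I_n => (e.2, e.1))) /=; last first.
  by exists (fun e : 'I_n * 'I_n => (e.2, e.1)) => -[a b].
apply: eq_bigl => -[a b] /=.
by rewrite -(inj_eq val_inj) /=; case: ltngtP.
Qed.

End BigFacts.

Lemma sum_exprn_card_set (R : comPzSemiRingType) (T : finType) (x : R) :
  \sum_(U : {set T}) x ^+ #|U| = (x + 1) ^+ #|T|.
Proof.
rewrite (reindex (fun f : {ffun T -> bool} => [set i | f i])) /=; last first.
  exists (fun U : {set T} => [ffun i => i \in U]) => [f _|U _].
    by apply/ffunP => i; rewrite ffunE inE.
  by apply/setP => i; rewrite inE ffunE.
transitivity (\sum_(f : {ffun T -> bool}) \prod_i (if f i then x else 1)).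
  apply: eq_bigr => f _; rewrite -prodr_const big_mkcond.
  by apply: eq_bigr => i _; rewrite inE.
rewrite -(bigA_distr_bigA (fun _ (b : bool) => if b then x else 1)) /=.
by rewrite (eq_bigr (fun _ => x + 1)) ?prodr_const // => i _; rewrite big_bool.
Qed.

Lemma ler_sum_subpred {R : numDomainType} {I : finType} {P Q : pred I} {F : I -> R} :
  (forall i, P i -> Q i) -> (forall i, 0 <= F i) ->
  \sum_(i | P i) F i <= \sum_(i | Q i) F i.
Proof.
move=> PQ F_ge0; rewrite [X in _ <= X](bigID P) /=.
rewrite (eq_bigl P) ?lerDl ?sumr_ge0 // => i.
by apply/andP/idP => [[]|Pi] //; rewrite PQ.
Qed.

Section BinomialRandomGraph.
Context {R : realType} {n : nat} (p : R).
Hypotheses (p_ge0 : 0 <= p) (p_le1 : p <= 1).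

Definition edge_weight (e : 'I_n * 'I_n) (b : bool) : R :=
  if (e.1 < e.2)%N then (if b then p else 1 - p) else (if b then 0 else 1).

Lemma gnp_weightE (G : graph n) : gnp_weight p G = \prod_e edge_weight e (G e).
Proof. by []. Qed.

Lemma edge_weight_ge0 e b : 0 <= edge_weight e b.
Proof. by rewrite /edge_weight; case: ifP => _; case: b; rewrite ?subr_ge0. Qed.

Lemma gnp_weight_ge0 (G : graph n) : 0 <= gnp_weight p G.
Proof. by apply: prodr_ge0 => e _; apply: edge_weight_ge0. Qed.

Lemma gnp_expect_prod (F : 'I_n * 'I_n -> bool -> R) :
  \sum_(G : graph n) gnp_weight p G * \prod_e F e (G e) =
  \prod_e \sum_(b : bool) edge_weight e b * F e b.
Proof.
rewrite bigA_distr_bigA; apply: eq_bigr => G _.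
by rewrite gnp_weightE -big_split.
Qed.

Lemma le_gnp_prob (A B : pred (graph n)) :
  (forall G, A G -> B G) -> gnp_prob p A <= gnp_prob p B.
Proof.
by move=> AB; apply: ler_sum_subpred => // G; apply: gnp_weight_ge0.
Qed.

Lemma gnp_prob_exists_le (I : finType) (A : I -> pred (graph n)) :
  gnp_prob p (fun G => [exists i, A i G]) <= \sum_i gnp_prob p (A i).
Proof.
have sum_ge0 G : 0 <= \sum_(i | A i G) gnp_weight p G.
  by apply: sumr_ge0 => i _; apply: gnp_weight_ge0.
rewrite /gnp_prob (exchange_big_dep predT) //=.
apply: le_trans _ (ler_sum_subpred (fun _ _ => isT) sum_ge0).
apply: ler_sum => G /existsP[i AiG].
by rewrite (bigD1 i) //= lerDl sumr_ge0 // => j _; apply: gnp_weight_ge0.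
Qed.

End BinomialRandomGraph.

Section NeighbourhoodTail.
Context {R : realType} {n : nat} (p : R) (W U : {set 'I_n}) (t : R).
Hypotheses (p_ge0 : 0 <= p) (p_le1 : p <= 1) (t_gt0 : 0 < t) (t_le1 : t <= 1).

(* The term of the expansion in which c has witness o contributes, on the pair
   (a, c), the indicator of the edge ac if o = Some a and of the non-edge ac if
   o = None.  Only pairs with a in U and c in W :\: U are constrained, so the
   two orientations of an edge are never both constrained. *)
Definition witness_factor (o : option 'I_n) (a c : 'I_n) (b : bool) : R :=
  if (a \in U) && (c \in W :\: U) then
    if o is Some v then (if v == a then b%:R else 1) else (~~ b)%:R
  else 1.

Definition witness_weight (c : 'I_n) (o : option 'I_n) : R :=
  if o is Some a then (if (a \in U) && (c \in W :\: U) then t else 0) else 1.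

Definition witness_edge_factor (g : {ffun 'I_n -> option 'I_n})
    (e : 'I_n * 'I_n) (b : bool) : R :=
  if (e.1 < e.2)%N then witness_factor (g e.2) e.1 e.2 b * witness_factor (g e.1) e.2 e.1 b
  else 1.

Definition witness_sum (G : graph n) : R :=
  \sum_(g : {ffun 'I_n -> option 'I_n})
    \prod_c witness_weight c (g c) * \prod_e witness_edge_factor g e (G e).

Definition pick_witness (G : graph n) : {ffun 'I_n -> option 'I_n} :=
  [ffun c => if c \in W :\: U then [pick a in U | adj G a c] else None].

Lemma witness_factor_ge0 o a c b : 0 <= witness_factor o a c b.
Proof. by rewrite /witness_factor; case: ifP; case: o => [v|]; try case: ifP; case: b. Qed.

Lemma witness_edge_factor_ge0 g e b : 0 <= witness_edge_factor g e b.
Proof.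
by rewrite /witness_edge_factor; case: ifP => // _; rewrite mulr_ge0 ?witness_factor_ge0.
Qed.

Lemma witness_weight_ge0 c o : 0 <= witness_weight c o.
Proof. by rewrite /witness_weight; case: o => // a; case: ifP => // _; apply: ltW. Qed.

Lemma witness_sum_term_ge0 (G : graph n) (g : {ffun 'I_n -> option 'I_n}) :
  0 <= \prod_c witness_weight c (g c) * \prod_e witness_edge_factor g e (G e).
Proof.
by rewrite mulr_ge0 //; apply: prodr_ge0 => *;
  [apply: witness_weight_ge0 | apply: witness_edge_factor_ge0].
Qed.

Lemma witness_factor_pick (G : graph n) a c :
  witness_factor (pick_witness G c) a c (adj G a c) = 1.
Proof.
rewrite /witness_factor ffunE; case: ifP => // /andP[aU cWU]; rewrite cWU.
case: pickP => [v /andP[vU Gva] | no_nbr]; first by case: eqP => [<-|] //; rewrite Gva.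
by have := no_nbr a; rewrite aU /= => ->.
Qed.

Lemma witness_edge_factor_pick (G : graph n) e :
  witness_edge_factor (pick_witness G) e (G e) = 1.
Proof.
case: e => i j; rewrite /witness_edge_factor /=; case: ifP => // ltij.
have Gij : G (i, j) = adj G i j by rewrite /adj ltij.
have Gji : G (i, j) = adj G j i by move: ltij; rewrite /adj; case: ltngtP.
by rewrite {1}Gij witness_factor_pick Gji witness_factor_pick mulr1.
Qed.

Lemma prod_witness_weight_pick (G : graph n) :
  \prod_c witness_weight c (pick_witness G c) = t ^+ #|nbhdW G U W|.
Proof.
rewrite -prodr_const [RHS]big_mkcond; apply: eq_bigr => c _.
rewrite /witness_weight /nbhdW /nbhd ffunE !inE.
case: (c \in U); case: (c \in W) => //=; rewrite ?andbF //.
case: pickP => [v /andP[vU Gvc] | no_nbr] /=.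
  by rewrite vU; case: existsP => // -[]; exists v; rewrite vU.
by case: existsP => // -[x /andP[xU Gxc]]; have := no_nbr x; rewrite xU Gxc.
Qed.

Lemma witness_sum_ge (G : graph n) : t ^+ #|nbhdW G U W| <= witness_sum G.
Proof.
rewrite /witness_sum (bigD1 (pick_witness G)) //= prod_witness_weight_pick.
rewrite big1 ?mulr1 => [|e _]; last exact: witness_edge_factor_pick.
by rewrite lerDl sumr_ge0 // => g _; apply: witness_sum_term_ge0.
Qed.

Definition witness_factor_mean (o : option 'I_n) (a c : 'I_n) : R :=
  p * witness_factor o a c true + (1 - p) * witness_factor o a c false.

Definition witness_mean (c : 'I_n) (o : option 'I_n) : R :=
  if c \in W :\: U then
    (if o is Some a then (if a \in U then p else 1) else (1 - p) ^+ #|U|)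
  else 1.

Lemma edge_mean_witness_edge_factor g e :
  \sum_(b : bool) edge_weight p e b * witness_edge_factor g e b =
  if (e.1 < e.2)%N then witness_factor_mean (g e.2) e.1 e.2 * witness_factor_mean (g e.1) e.2 e.1
  else 1.
Proof.
rewrite big_bool /= /witness_edge_factor /edge_weight /witness_factor_mean.
case: ifP => _; last by rewrite mul0r add0r mulr1.
have [hA|hA] := boolP ((e.1 \in U) && (e.2 \in W :\: U));
  have [hB|hB] := boolP ((e.2 \in U) && (e.1 \in W :\: U)).
- by case/andP: hA => e1U _; case/andP: hB => _; rewrite inE e1U.
- by rewrite /witness_factor (negbTE hB); ring.
- by rewrite /witness_factor (negbTE hA); ring.
- by rewrite /witness_factor (negbTE hA) (negbTE hB); ring.
Qed.

Lemma prod_witness_factor_mean o c :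
  \prod_a witness_factor_mean o a c = witness_mean c o.
Proof.
rewrite /witness_mean /witness_factor_mean /witness_factor.
case: ifP => cWU; last by apply: big1 => a _; rewrite andbF; ring.
case: o => [v|].
  rewrite (bigD1 v) //= big1 ?mulr1 => [|a av]; rewrite andbT.
    by case: (v \in U); rewrite /= ?eqxx; ring.
  by case: (a \in U); rewrite /= ?(eq_sym v) ?(negbTE av); ring.
rewrite -prodr_const [RHS]big_mkcond; apply: eq_bigr => a _.
by rewrite andbT; case: (a \in U) => /=; ring.
Qed.

Lemma gnp_expect_witness_edge_factor g :
  \sum_(G : graph n) gnp_weight p G * \prod_e witness_edge_factor g e (G e) =
  \prod_c witness_mean c (g c).
Proof.
rewrite gnp_expect_prod (eq_bigr _ (fun e _ => edge_mean_witness_edge_factor g e)).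
rewrite -big_mkcond /= (big_ltn_pairs (fun a c => witness_factor_mean (g c) a c)).
  by rewrite exchange_big; apply: eq_bigr => c _; apply: prod_witness_factor_mean.
by move=> a; rewrite /witness_factor_mean /witness_factor inE; case: (a \in U); rewrite /=; ring.
Qed.

Lemma sum_witness_weight_mean c :
  \sum_o witness_weight c o * witness_mean c o =
  if c \in W :\: U then (1 - p) ^+ #|U| + #|U|%:R * t * p else 1.
Proof.
rewrite big_option /witness_weight /witness_mean; case: ifP => cWU /=.
  rewrite mul1r (eq_bigr (fun a => if a \in U then t * p else 0)) -?big_mkcond /=.
    by rewrite sumr_const -mulr_natl; ring.
  by move=> a _; rewrite andbT; case: (a \in U); rewrite ?mul0r.
by rewrite big1 ?addr0 ?mulr1 // => a _; rewrite andbF mul0r.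
Qed.

Lemma gnp_expect_witness_sum :
  \sum_(G : graph n) gnp_weight p G * witness_sum G =
  ((1 - p) ^+ #|U| + #|U|%:R * t * p) ^+ #|W :\: U|.
Proof.
under eq_bigr do rewrite /witness_sum mulr_sumr.
rewrite exchange_big /=.
under eq_bigr do under eq_bigr do rewrite mulrCA.
under eq_bigr do rewrite -mulr_sumr gnp_expect_witness_edge_factor -big_split /=.
rewrite -(bigA_distr_bigA (fun c o => witness_weight c o * witness_mean c o)) /=.
rewrite (eq_bigr _ (fun c _ => sum_witness_weight_mean c)).
by rewrite -big_mkcond prodr_const.
Qed.

Lemma gnp_prob_nbhdW_le (K : nat) :
  gnp_prob p (fun G => #|nbhdW G U W| <= K)%N <=
  (t ^+ K)^-1 * ((1 - p) ^+ #|U| + #|U|%:R * t * p) ^+ #|W :\: U|.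
Proof.
have tK_gt0 : 0 < t ^+ K by apply: exprn_gt0.
rewrite -gnp_expect_witness_sum mulr_sumr /gnp_prob.
apply: le_trans (_ : _ <= \sum_(G | (#|nbhdW G U W| <= K)%N)
                         (t ^+ K)^-1 * (gnp_weight p G * witness_sum G)) _.
  apply: ler_sum => G small; rewrite mulrCA -[X in X <= _]mulr1.
  rewrite ler_wpM2l ?gnp_weight_ge0 // ler_pdivlMl // mulr1.
  by apply: le_trans _ (witness_sum_ge G); rewrite ler_wiXn2l // ltW.
apply: ler_sum_subpred => // G.
by rewrite mulr_ge0 ?invr_ge0 ?mulr_ge0 ?gnp_weight_ge0 ?sumr_ge0 // => *;
  [apply: ltW | apply: witness_sum_term_ge0].
Qed.

End NeighbourhoodTail.

Section TiltBounds.
Context {R : realType}.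

Lemma expR1_le4 : expR 1 <= 4 :> R.
Proof.
have half_le2 : expR (2^-1) <= 2 :> R.
  rewrite -[X in X <= _]invrK -expRN -[X in _ <= X]invrK lef_pV2 ?posrE ?expR_gt0 //.
  by apply: le_trans (expR_ge1Dx _); lra.
have -> : 1 = 2^-1 + 2^-1 :> R by field.
by rewrite expRD; have := expR_gt0 (2^-1 : R); nra.
Qed.

Lemma exprn_le_expR (B a : R) k : 0 <= B -> B <= expR a -> B ^+ k <= expR (k%:R * a).
Proof. by move=> B_ge0 Ba; rewrite expRM_natl lerXn2r ?nnegrE ?expR_ge0. Qed.

Lemma ler_expR_mul (A B a b : R) : 0 <= A -> 0 <= B ->
  A <= expR a -> B <= expR b -> A * B <= expR (a + b).
Proof. by move=> A_ge0 B_ge0 Aa Bb; rewrite expRD ler_pM. Qed.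

Lemma ler_expR_half (x : R) : 0 <= x -> x <= expR (x / 2).
Proof.
move=> x_ge0.
have -> : x / 2 = x / 4 * 2%:R by field.
rewrite expRM_natr; apply: le_trans (_ : (1 + x / 4) ^+ 2 <= _).
  by have := sqr_ge0 (1 - x / 4); rewrite !expr2; lra.
by rewrite lerXn2r ?nnegrE ?expR_ge0 ?expR_ge1Dx //; lra.
Qed.

Lemma expr1B_le_expR (p : R) u : 0 <= p -> p <= 1 -> (1 - p) ^+ u <= expR (- (p * u%:R)).
Proof.
move=> p_ge0 p_le1; rewrite mulrC -mulrN exprn_le_expR ?subr_ge0 //.
exact: expR_ge1Dx.
Qed.

Lemma tilt_small (x w b : R) (K m : nat) :
  0 < x -> x <= 3 -> 0 <= b -> b <= expR (- x) ->
  K%:R <= x * w / 240 -> 3 * w / 4 <= m%:R ->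
  ((16^-1) ^+ K)^-1 * (b + x * 16^-1) ^+ m <= expR (- (x * w / 40)).
Proof.
move=> x_gt0 x_le3 b_ge0 b_le hK hm.
have b_le_lin : b <= 1 - x / 4.
  have bx : b * (1 + x) <= 1.
    apply: le_trans (_ : expR (- x) * expR x <= 1); last by rewrite -expRD addNr expR0.
    by apply: ler_pM; rewrite ?expR_ge1Dx //; lra.
  (* (1 + x)(1 - x/4) >= 1 exactly when x <= 3 *)
  have : (1 + x) * (1 - x / 4 - b) >= 0 by nra.
  by rewrite pmulr_rge0 ?subr_ge0; lra.
have e4 : 16 <= expR 4 :> R.
  have -> : 4 = 1 * 4%:R :> R by rewrite mul1r.
  rewrite expRM_natr (_ : 16 = 2 ^+ 4) ?lerXn2r ?nnegrE ?expR_ge0 //; last by rewrite -natrX.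
  by apply: le_trans (expR_ge1Dx _); lra.
apply: le_trans (_ : expR (K%:R * 4 + m%:R * (- (3 / 16 * x))) <= _).
  apply: ler_expR_mul; rewrite ?exprn_ge0 ?invr_ge0 ?exprn_ge0 //; try lra.
    by rewrite exprVn invrK exprn_le_expR.
  apply: exprn_le_expR; first lra.
  by apply: le_trans (expR_ge1Dx _); lra.
rewrite ler_expR.
have xm : x * (3 * w / 4) <= x * m%:R by rewrite ler_wpM2l // ltW.
have := ler0n R K; lra.
Qed.

Lemma tilt_large (x w b : R) (K m : nat) :
  3 < x -> 0 <= b -> b <= expR (- x) -> K%:R <= w / 4 -> 3 * w / 4 <= m%:R ->
  ((expR (- x) / x) ^+ K)^-1 * (b + x * (expR (- x) / x)) ^+ m <= expR (- (x * w / 40)).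
Proof.
move=> x_gt3 b_ge0 b_le hK hm.
have x_gt0 : 0 < x by lra.
have -> : x * (expR (- x) / x) = expR (- x) by field; lra.
have inv_t : (expR (- x) / x)^-1 <= expR (3 / 2 * x).
  rewrite invf_div expRN invrK (_ : 3 / 2 * x = x / 2 + x); last by field.
  by rewrite expRD ler_wpM2r ?expR_ge0 ?ler_expR_half //; lra.
have base : b + expR (- x) <= expR (1 - x).
  rewrite addrC expRD; have := expR_gt0 (- x); have := expR_ge1Dx (1 : R); nra.
apply: le_trans (_ : expR (K%:R * (3 / 2 * x) + m%:R * (1 - x)) <= _).
  have t_ge0 : 0 <= expR (- x) / x by rewrite divr_ge0 ?expR_ge0 ?ltW.
  apply: ler_expR_mul; rewrite ?invr_ge0 ?exprn_ge0 ?addr_ge0 ?expR_ge0 //.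
    by rewrite -exprVn exprn_le_expR // invr_ge0.
  by rewrite exprn_le_expR // addr_ge0 ?expR_ge0.
rewrite ler_expR.
have w_ge0 : 0 <= w by have := ler0n R K; lra.
have Kx : K%:R * x <= w / 4 * x by rewrite ler_wpM2r //; lra.
have mx : m%:R * (1 - x) <= 3 * w / 4 * (1 - x) by rewrite ler_wnM2r //; lra.
nra.
Qed.

Lemma exists_tilt {x w b : R} {K m : nat} :
  0 < x -> 0 <= b -> b <= expR (- x) ->
  K%:R <= x * w / 240 -> K%:R <= w / 4 -> 3 * w / 4 <= m%:R ->
  exists2 t, 0 < t <= 1 & (t ^+ K)^-1 * (b + x * t) ^+ m <= expR (- (x * w / 40)).
Proof.
move=> x_gt0 b_ge0 b_le hKx hKw hm; have [x_le3|x_gt3] := lerP x 3.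
  by exists 16^-1; [apply/andP; split; lra | exact: tilt_small].
exists (expR (- x) / x); last exact: tilt_large.
rewrite divr_gt0 ?expR_gt0 // ler_pdivrMr // mul1r.
by apply: le_trans (_ : 1 <= x); [rewrite expR_le1|]; lra.
Qed.

End TiltBounds.

Section Expansion.
Context {R : realType} {n : nat} (p d : R) (W : {set 'I_n}).
Hypotheses (p_gt0 : 0 < p) (p_le1 : p <= 1) (d_ge1 : 1 <= d) (n_gt0 : (0 < n)%N).
Hypotheses (hW : 200 * ln (n%:R : R) <= p * #|W|%:R) (hd : 240 * d <= p * #|W|%:R).

Definition expansion_fails (U : {set 'I_n}) (G : graph n) : bool :=
  ((#|U|%:R : R) <= #|W|%:R / (4 * d)) && ~~ (d * #|U|%:R <= #|nbhdW G U W|%:R).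

Lemma not_expandsE (G : graph n) : ~~ expands W d G = [exists U, expansion_fails U G].
Proof. by rewrite negb_forall; apply: eq_existsb => U; rewrite negb_imply. Qed.

Lemma gnp_prob_nbhdW_le_truncn (U : {set 'I_n}) :
  (0 < #|U|)%N -> (#|U|%:R : R) <= #|W|%:R / (4 * d) ->
  gnp_prob p (fun G => #|nbhdW G U W| <= Num.truncn (d * #|U|%:R))%N <=
  (n%:R ^+ (2 * #|U| + 3))^-1.
Proof.
move=> U_gt0 small; set u := #|U|%:R in small *; set K := Num.truncn (d * u).
have d_gt0 : 0 < d by apply: lt_le_trans d_ge1.
have u_ge1 : 1 <= u by rewrite /u ler1n.
have uw : u * (4 * d) <= #|W|%:R by rewrite -ler_pdivlMr ?mulr_gt0.
have K_le : K%:R <= d * u by rewrite truncn_le mulr_ge0 // ltW.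
have m_ge : #|W|%:R - u <= #|W :\: U|%:R :> R.
  rewrite lerBlDr -natrD ler_nat -(cardsID U W) addnC leq_add2l.
  by apply: subset_leq_card; exact: subsetIr.
have x_gt0 : 0 < p * u by rewrite mulr_gt0 // (lt_le_trans ltr01).
have b_ge0 : 0 <= (1 - p) ^+ #|U| by rewrite exprn_ge0 // subr_ge0.
have K_le_X : K%:R <= p * u * #|W|%:R / 240.
  have : u * (240 * d) <= u * (p * #|W|%:R) by rewrite ler_wpM2l // (le_trans ler01).
  by move: K_le; nra.
have K_le_w : K%:R <= #|W|%:R / 4 :> R by move: d_ge1; nra.
have m_ge_w : 3 * #|W|%:R / 4 <= #|W :\: U|%:R :> R by move: d_ge1; nra.
have [t /andP[t_gt0 t_le1] tilt] := exists_tilt x_gt0 b_ge0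
  (expr1B_le_expR _ _ (ltW p_gt0) p_le1) K_le_X K_le_w m_ge_w.
have n_pow : n%:R ^+ (2 * #|U| + 3) <= expR (p * u * #|W|%:R / 40).
  rewrite -[X in X ^+ _]lnK ?posrE ?ltr0n // -expRM_natl ler_expR natrD natrM -/u.
  have ln_ge0 : 0 <= ln (n%:R : R) by rewrite ln_ge0 // ler1n.
  have : u * (200 * ln n%:R) <= u * (p * #|W|%:R) by rewrite ler_wpM2l // (le_trans ler01).
  nra.
apply: le_trans (gnp_prob_nbhdW_le _ _ _ _ (ltW p_gt0) p_le1 t_gt0 t_le1 K) _.
rewrite -[X in _ <= X]mul1r ler_pdivlMr ?exprn_gt0 ?ltr0n // mulrC.
rewrite (_ : #|U|%:R * t * p = p * u * t); last by rewrite /u; ring.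
apply: le_trans (ler_pM _ _ n_pow tilt) _; last by rewrite -expRD addrN expR0.
  by rewrite exprn_ge0 // ler0n.
by rewrite mulr_ge0 ?invr_ge0 ?exprn_ge0 ?addr_ge0 ?mulr_ge0 // ltW.
Qed.

Lemma gnp_prob_expansion_fails (U : {set 'I_n}) :
  gnp_prob p (expansion_fails U) <= (n%:R ^+ 3)^-1 * ((n%:R ^+ 2)^-1) ^+ #|U|.
Proof.
have rhs_ge0 : 0 <= (n%:R ^+ 3)^-1 * ((n%:R ^+ 2)^-1) ^+ #|U| :> R.
  by rewrite mulr_ge0 ?exprn_ge0 ?invr_ge0 ?exprn_ge0.
have [small|large] := boolP ((#|U|%:R : R) <= #|W|%:R / (4 * d)); last first.
  by rewrite /gnp_prob big_pred0 // => G; rewrite /expansion_fails (negbTE large).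
have [U0|U_gt0] := posnP #|U|.
  by rewrite /gnp_prob big_pred0 // => G; rewrite /expansion_fails U0 mulr0 ler0n andbF.
rewrite exprVn -invfM -exprM -exprD addnC.
apply: le_trans _ (gnp_prob_nbhdW_le_truncn U U_gt0 small).
apply: le_gnp_prob _ (ltW p_gt0) p_le1 _ _ _ => G /andP[_]; rewrite -ltNge => lt_du.
have d_ge0 : 0 <= d := le_trans ler01 d_ge1.
by rewrite truncn_ge_nat ?mulr_ge0 // ltW.
Qed.

Lemma gnp_prob_not_expands_le :
  gnp_prob p (fun G => ~~ expands W d G) <= expR 1 / n%:R ^+ 3.
Proof.
have n_pos : (0 : R) < n%:R by rewrite ltr0n.
have inv_n2_ge0 : 0 <= (n%:R ^+ 2)^-1 :> R by rewrite invr_ge0 exprn_ge0 // ltW.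
rewrite {1}/gnp_prob (eq_bigl _ _ not_expandsE).
apply: le_trans (gnp_prob_exists_le _ (ltW p_gt0) p_le1 _ _) _.
apply: le_trans (ler_sum _ (fun U _ => gnp_prob_expansion_fails U)) _.
rewrite -mulr_sumr sum_exprn_card_set card_ord mulrC.
apply: ler_wpM2r; first by rewrite invr_ge0 exprn_ge0.
apply: le_trans (_ : expR (n%:R * (n%:R ^+ 2)^-1) <= _).
  by rewrite exprn_le_expR ?addr_ge0 // addrC expR_ge1Dx.
rewrite ler_expR expr2 invfM mulrA mulfV ?gt_eqF // mul1r invf_le1 //.
by rewrite ler1n.
Qed.

End Expansion.

Lemma n2_gnp_prob_not_expands_le {R : realType} {n : nat} {p d : R} {W : {set 'I_n}} :
  (4 <= n)%N -> 0 < p -> p <= 1 -> 200 * ln (n%:R : R) <= p * #|W|%:R -> 1 <= d ->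
  d <= p * #|W|%:R / (240 * ln (n%:R * p)) ->
  n%:R ^+ 2 * gnp_prob p (fun G : graph n => ~~ expands W d G) <= expR 1 / n%:R.
Proof.
move=> n_ge4 p_gt0 p_le1 hW d_ge1 hd.
have n_pos : (0 : R) < n%:R by rewrite ltr0n (leq_trans _ n_ge4).
have ln_n_ge1 : 1 <= ln (n%:R : R).
  by rewrite -ler_expR lnK ?posrE // (le_trans expR1_le4) // (ler_nat R 4 n).
have W_le_n : (#|W|%:R : R) <= n%:R by rewrite ler_nat -[X in (_ <= X)%N]card_ord max_card.
have ln_np_ge1 : 1 <= ln (n%:R * p).
  rewrite -ler_expR lnK ?posrE ?mulr_gt0 // (le_trans expR1_le4) //.
  have : p * #|W|%:R <= p * n%:R by rewrite ler_wpM2l // ltW.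
  by rewrite (mulrC _ p); lra.
have hd' : 240 * d <= p * #|W|%:R.
  by move: hd; rewrite ler_pdivlMr ?mulr_gt0 //; [nra | lra].
apply: le_trans (_ : n%:R ^+ 2 * (expR 1 / n%:R ^+ 3) <= _).
  by rewrite ler_wpM2l ?exprn_ge0 ?ler0n // gnp_prob_not_expands_le // (leq_trans _ n_ge4).
by rewrite le_eqVlt; apply/orP; left; apply/eqP; field; rewrite gt_eqF.
Qed.

Local Open Scope classical_set_scope.

Theorem lemma3p39 (R : realType) (p : nat -> R) (W : forall n : nat, {set 'I_n})
  (d : nat -> R)
  (hyp : exists N0 : nat, forall n : nat, (N0 <= n)%N ->
     [/\ 0 < p n, p n <= 1,
         200 * ln (n%:R) <= p n * #|W n|%:R,
         1 <= d n &
         d n <= p n * #|W n|%:R / (240 * ln (n%:R * p n))]) :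
  (fun n : nat => (n%:R : R) ^+ 2 *
      gnp_prob (p n) (fun G : graph n => ~~ expands (W n) (d n) G))
    @ \oo --> (0 : R).
Proof.
case: hyp => N0 hN.
apply: (@squeeze_cvgr _ _ _ _ (fun _ => 0) (fun k => 2 * expR 1 * harmonic k)).
- near=> k.
  have k_ge : (maxn N0 4 <= k)%N by near: k; exact: nbhs_infty_ge.
  have [p_gt0 p_le1 hW d_ge1 hd] := hN k (leq_trans (leq_maxl _ _) k_ge).
  have k_ge4 : (4 <= k)%N := leq_trans (leq_maxr _ _) k_ge.
  apply/andP; split.
    by rewrite mulr_ge0 ?exprn_ge0 // sumr_ge0 // => G _; apply: gnp_weight_ge0; lra.
  apply: le_trans (n2_gnp_prob_not_expands_le k_ge4 p_gt0 p_le1 hW d_ge1 hd) _.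
  have k_pos : (0 : R) < k%:R by rewrite ltr0n (leq_trans _ k_ge4).
  rewrite /harmonic ler_pdivrMr // mulrAC ler_pdivlMr ?ltr0n // -addn1 natrD.
  have k_ge1 : (1 : R) <= k%:R by rewrite ler1n (leq_trans _ k_ge4).
  by have := expR_gt0 (1 : R); nra.
- exact: cvg_cst.
- by rewrite -(mulr0 (2 * expR (1 : R))); apply: cvgMl_tmp; exact: cvg_harmonic.
Unshelve. all: by end_near.
Qed.
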